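(* Let $A$ be a hyperoperator on $\mathbb{R}^n$ on the complex Banach space $X$. Then: (a) If $f\in\mathcal{E}(\mathbb{R}^n,\mathbb{R})$, then $f(a)$ maps $D_A$ into $D_A$, and if also $g\in\mathcal{E}(\mathbb{R}^n,\mathbb{R})$, then $g(a)f(a)=(fg)(a)$ on $D_A$. (b) If $f\in\mathcal{E}(\mathbb{R}^n,\mathbb{R}^m)$, then $f(a)$ is a closable operator (i.e. the closure in $X\times X^m$ of its graph is the graph of an operator). (c) If $f_k\to f$ in $\mathcal{E}(\mathbb{R}^n,\mathbb{R}^p)$, then $f_k(a)x\to f(a)x$ for every $x\in D_A$. (d) If $K\subset\mathbb{R}^n$ is compact, $x_j\in D_{A,K}$ for all $j$, $x_j\to x$ in $X$, and $f\in\mathcal{E}(\mathbb{R}^n,\mathbb{R}^m)$, then $f(a)x_j\to f(a)x$.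
   Context: $X$ is a complex Banach space, $L(X)$ the bounded operators. $\mathcal{D}(\mathbb{R}^n)=C_c^\infty(\mathbb{R}^n)$ (complex-valued); $\mathcal{E}(\mathbb{R}^n,\mathbb{R}^m)$ the smooth maps $\mathbb{R}^n\to\mathbb{R}^m$ with the topology of uniform convergence of all derivatives on compacts. A hyperoperator on $\mathbb{R}^n$ is a linear map $A:\mathcal{D}(\mathbb{R}^n)\to L(X)$ which is continuous ($A(\phi_j)\to0$ in operator norm when $\phi_j\to0$ in $\mathcal{D}(\mathbb{R}^n)$), multiplicative ($A(\phi\psi)=A(\phi)A(\psi)$), and such that (i) $D_A:=\bigcup_\phi\operatorname{Im}A(\phi)$ is dense and (ii) $\bigcap_\phi\operatorname{Ker}A(\phi)=\{0\}$. For a smooth $f:\mathbb{R}^n\to\mathbb{R}^m$ and $x\in D_A$, written $x=A(\phi)y$, one sets $f(a)x:=A(f\phi)y$ (componentwise); this is well defined and equals $A(f\chi)x$ for any $\chi\in\mathcal{D}(\mathbb{R}^n)$ with $\chi=1$ near $\operatorname{supp}\phi$, so $f(a)$ is a densely defined operator $D_A\to X^m$. For $x\in X$, the local spectrum $\sigma_x(A)$ is the support of the $X$-valued distribution $\phi\mapsto A(\phi)x$, and $D_{A,K}=\{x\in X:\sigma_x(A)\subset K\}$. *)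

From HB Require Import structures.
From mathcomp Require Import all_boot all_order all_algebra.
From mathcomp Require Import all_classical all_reals all_analysis.
From mathcomp Require Import complex.
Set Implicit Arguments. Unset Strict Implicit. Unset Printing Implicit Defensive.
Import Order.TTheory GRing.Theory Num.Theory numFieldNormedType.Exports.
Local Open Scope classical_set_scope.
Local Open Scope ring_scope.

Definition Dseq (R : realType) (n : nat) (vs : seq 'rV[R]_n)
    (f : 'rV[R]_n -> R) : 'rV[R]_n -> R :=
  foldr (fun v g => 'D_v g) f vs.

Definition smooth (R : realType) (n : nat) (f : 'rV[R]_n -> R) : Prop :=
  forall vs : seq 'rV[R]_n,
    continuous (Dseq vs f) /\ forall x v, derivable (Dseq vs f) x v.

Definition smoothv (R : realType) (n m : nat) (f : 'rV[R]_n -> 'rV[R]_m) : Prop :=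
  forall i : 'I_m, smooth (fun t => f t ord0 i).

Definition Ecvg (R : realType) (n p : nat) (fk : nat -> 'rV[R]_n -> 'rV[R]_p)
    (f : 'rV[R]_n -> 'rV[R]_p) : Prop :=
  (forall k, smoothv (fk k)) /\ smoothv f /\
  forall (i : 'I_p) (vs : seq 'rV[R]_n) (K : set 'rV[R]_n), compact K ->
    forall e : R, 0 < e -> \forall k \near \oo, forall t, K t ->
      `| Dseq vs (fun s => fk k s ord0 i) t - Dseq vs (fun s => f s ord0 i) t | <= e.

Definition cRe (R : realType) (n : nat) (phi : 'rV[R]_n -> R[i]) : 'rV[R]_n -> R :=
  fun t => complex.Re (phi t).
Definition cIm (R : realType) (n : nat) (phi : 'rV[R]_n -> R[i]) : 'rV[R]_n -> R :=
  fun t => complex.Im (phi t).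

Definition supp (R : realType) (n : nat) (phi : 'rV[R]_n -> R[i]) : set 'rV[R]_n :=
  closure [set t | phi t != 0].

Definition test (R : realType) (n : nat) (phi : 'rV[R]_n -> R[i]) : Prop :=
  smooth (cRe phi) /\ smooth (cIm phi) /\ compact (supp phi).

Definition unif0 (R : realType) (n : nat) (g : nat -> 'rV[R]_n -> R) : Prop :=
  forall e : R, 0 < e -> \forall j \near \oo, forall t, `|g j t| <= e.

Definition Dcvg0 (R : realType) (n : nat) (phi : nat -> 'rV[R]_n -> R[i]) : Prop :=
  (forall j, test (phi j)) /\
  (exists K : set 'rV[R]_n, compact K /\ forall j, supp (phi j) `<=` K) /\
  forall vs : seq 'rV[R]_n,
    unif0 (fun j => Dseq vs (cRe (phi j))) /\ unif0 (fun j => Dseq vs (cIm (phi j))).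

Definition bounded_op (R : realType) (X : completeNormedModType R[i])
    (T : X -> X) : Prop :=
  (forall (a : R[i]) (x y : X), T (a *: x + y) = a *: T x + T y) /\ continuous T.

Definition opnorm0 (R : realType) (X : completeNormedModType R[i])
    (T : nat -> X -> X) : Prop :=
  forall e : R[i], 0 < e -> \forall j \near \oo, forall x : X, `|T j x| <= e * `|x|.

Definition DA (R : realType) (X : completeNormedModType R[i]) (n : nat)
    (A : ('rV[R]_n -> R[i]) -> X -> X) : set X :=
  [set x | exists (phi : 'rV[R]_n -> R[i]) (y : X), test phi /\ x = A phi y].

Definition hyperoperator (R : realType) (X : completeNormedModType R[i]) (n : nat)
    (A : ('rV[R]_n -> R[i]) -> X -> X) : Prop :=
  [/\ (forall phi, test phi -> bounded_op (A phi)),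
      (forall (a : R[i]) phi psi, test phi -> test psi ->
          A (fun t => a * phi t + psi t) = (fun x => a *: A phi x + A psi x)),
      (forall phi psi, test phi -> test psi ->
          A (fun t => phi t * psi t) = (A phi \o A psi)),
      (forall phis, Dcvg0 phis -> opnorm0 (fun j => A (phis j))) &
      closure (DA A) = setT /\
      (forall x : X, (forall phi, test phi -> A phi x = 0) -> x = 0)].

(* f(a) for f : R^n -> R : for x = A(phi) y in D_A, f(a) x := A(f phi) y
   (with a chosen representation); 0 outside D_A *)
Definition fa1 (R : realType) (X : completeNormedModType R[i]) (n : nat)
    (A : ('rV[R]_n -> R[i]) -> X -> X) (f : 'rV[R]_n -> R) (x : X) : X :=
  match pselect (exists p : ('rV[R]_n -> R[i]) * X, test p.1 /\ x = A p.1 p.2) with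
  | left h => let p := proj1_sig (cid h) in A (fun t => ((f t)%:C)%C * p.1 t) p.2
  | right _ => 0
  end.

Definition fa (R : realType) (X : completeNormedModType R[i]) (n m : nat)
    (A : ('rV[R]_n -> R[i]) -> X -> X) (f : 'rV[R]_n -> 'rV[R]_m) (x : X) : 'I_m -> X :=
  fun i => fa1 A (fun t => f t ord0 i) x.

(* (x, z) lies in the closure in X x X^m of the graph of f(a) : D_A -> X^m
   (X x X^m is metrizable, so closure = sequential closure) *)
Definition in_graph_closure (R : realType) (X : completeNormedModType R[i]) (n m : nat)
    (A : ('rV[R]_n -> R[i]) -> X -> X) (f : 'rV[R]_n -> 'rV[R]_m)
    (x : X) (z : 'I_m -> X) : Prop :=
  exists xs : nat -> X, (forall j, DA A (xs j)) /\ (xs j @[j --> \oo] --> x) /\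
    forall i : 'I_m, fa A f (xs j) i @[j --> \oo] --> z i.

Definition closable (R : realType) (X : completeNormedModType R[i]) (n m : nat)
    (A : ('rV[R]_n -> R[i]) -> X -> X) (f : 'rV[R]_n -> 'rV[R]_m) : Prop :=
  forall x z1 z2, in_graph_closure A f x z1 -> in_graph_closure A f x z2 -> z1 = z2.

(* local spectrum: support of the X-valued distribution phi |-> A(phi) x *)
Definition locspec (R : realType) (X : completeNormedModType R[i]) (n : nat)
    (A : ('rV[R]_n -> R[i]) -> X -> X) (x : X) : set 'rV[R]_n :=
  [set t | forall U : set 'rV[R]_n, open U -> U t ->
     exists phi, test phi /\ supp phi `<=` U /\ A phi x != 0].

Definition DAK (R : realType) (X : completeNormedModType R[i]) (n : nat)
    (A : ('rV[R]_n -> R[i]) -> X -> X) (K : set 'rV[R]_n) : set X :=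
  [set x | locspec A x `<=` K].

(* Everything rests on the representation f(a)(A(phi)y) = A(f phi)y and on the
   fact that the operators A(theta), theta in D, separate the points of X: this
   makes f(a) well defined and gives (a); for (b), a limit z of f(a)x_j satisfies
   A(theta)z = A(f theta)x for every theta.  For (c), f_k(a)x - f(a)x is
   A((f_k - f)phi)y, and (f_k - f)phi -> 0 in D by the Leibniz rule, so the
   continuity of A applies.  For (d), take chi in D equal to 1 near K; then
   A(chi)y = y whenever sigma_y(A) is in K, because A(psi)y = 0 for every psi
   vanishing near sigma_y(A) (a partition of unity on supp psi).  Hence
   f(a)x_j = A(f chi)x_j -> A(f chi)x = f(a)x. *)

From HB Require Import structures.
From mathcomp Require Import all_boot all_order all_algebra.
From mathcomp Require Import all_classical all_reals all_analysis.
From mathcomp Require Import complex finmap.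
From mathcomp Require Import ring lra.
Import Order.TTheory GRing.Theory Num.Theory numFieldNormedType.Exports.
Local Open Scope classical_set_scope.
Local Open Scope ring_scope.
Set Implicit Arguments. Unset Strict Implicit. Unset Printing Implicit Defensive.

Section ExpInv.
Variable R : realType.
Implicit Types s : R.

Definition expinv (m : nat) s : R :=
  if 0 < s then s^-1 ^+ m * expR (- s^-1) else 0.

Lemma expinv_ge0 m s : 0 <= expinv m s.
Proof.
rewrite /expinv; case: ifP => // s0.
by rewrite mulr_ge0 ?expR_ge0 // exprn_ge0 // invr_ge0 ltW.
Qed.

Lemma expinv_gt0 m s : 0 < s -> 0 < expinv m s.
Proof.
by move=> s0; rewrite /expinv s0 mulr_gt0 ?expR_gt0 // exprn_gt0 // invr_gt0.
Qed.

Lemma expinv_eq0 m s : s <= 0 -> expinv m s = 0.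
Proof. by move=> s0; rewrite /expinv ltNge s0. Qed.

Lemma expinv0_le : {homo expinv 0 : a b / a <= b}.
Proof.
move=> a b ab; have [a0|a0] := leP a 0; first by rewrite expinv_eq0 // expinv_ge0.
have b0 : 0 < b by apply: lt_le_trans ab.
by rewrite /expinv a0 b0 !mul1r ler_expR lerN2 lef_pV2.
Qed.

Lemma expinv_le m s : expinv m s <= (m.+1)`!%:R * `|s|.
Proof.
have [s0|s0] := leP s 0; first by rewrite expinv_eq0 // mulr_ge0.
rewrite gtr0_norm // /expinv s0.
set w := s^-1; have w0 : 0 < w by rewrite invr_gt0.
have F0 : 0 < (m.+1)`!%:R :> R by rewrite ltr0n fact_gt0.
have wexp : w ^+ m.+1 <= (m.+1)`!%:R * expR w.
  rewrite -ler_pdivrMl // mulrC.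
  by apply: le_trans (expR_ge1Dxn m (ltW w0)); rewrite lerDr.
rewrite expRN ler_pdivrMr ?expR_gt0 //.
have -> : w ^+ m = w ^+ m.+1 * s by rewrite exprS mulrAC mulVf ?gt_eqF // mul1r.
by rewrite [_ * s * _]mulrAC ler_wpM2r // ltW.
Qed.

Lemma expinv_cvg0 m : expinv m h @[h --> (0:R)] --> (0:R).
Proof.
apply: (@squeeze_cvgr _ _ _ _ (fun=> 0) (fun h => (m.+1)`!%:R * `|h|)).
- by near=> h; rewrite expinv_ge0 expinv_le.
- exact: cvg_cst.
- rewrite -[X in _ --> X](mulr0 (m.+1)`!%:R) -[X in _ * X](normr0 R).
  by apply: cvgMl_tmp; exact: cvg_norm.
Unshelve. all: by end_near.
Qed.

Definition expinv' m s := - m%:R * expinv m.+1 s + expinv m.+2 s.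

Lemma is_derive_expinv_pos m s : 0 < s -> is_derive s (1:R) (expinv m) (expinv' m s).
Proof.
move=> s0.
pose G := ((fun t : R => t^-1) ^+ m) * (expR \o (fun t : R => - t^-1)).
have GE : \forall t \near s, G t = expinv m t.
  near=> t.
  have t0 : 0 < t by near: t; exact: (cvgr_gt s).
  by rewrite /G /expinv t0 exprfctE.
apply: (near_eq_is_derive GE).
have s0' : s != 0 by rewrite gt_eqF.
have Dinv : is_derive s (1:R) (fun t : R => t^-1) (- s ^- 2).
  by have := @is_deriveV R id s 1 1 s0' (is_derive_id _ _); rewrite scaler1.
have DX : is_derive s (1:R) ((fun t : R => t^-1) ^+ m)
    ((m%:R * s^-1 ^+ m.-1) *: - s ^- 2) by exact: is_deriveX.
have DN : is_derive s (1:R) (fun t : R => - t^-1) (- - s ^- 2) by exact: is_deriveN.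
have DE : is_derive s (1:R) (expR \o (fun t : R => - t^-1))
    (expR (- s^-1) * - - s ^- 2) by exact: is_derive1_comp.
apply: (is_derive_eq (is_deriveM DX DE)).
rewrite /expinv' /expinv s0 exprfctE /= -exprVn.
case: m {G GE DX} => [|k] /=; rewrite ?mul0r ?mul1r ?add0r !exprS ?expr0 /GRing.scale /=.
  by ring.
by rewrite -natr1; ring.
Unshelve. all: by end_near.
Qed.

Lemma is_derive_expinv0 m : is_derive (0:R) (1:R) (expinv m) (expinv' m 0).
Proof.
rewrite /expinv' !expinv_eq0 // mulr0 addr0.
have quot : (fun h : R => h^-1 *: ((expinv m \o shift 0) (h *: 1) - expinv m 0))
    @ 0^' --> (0:R).
  apply: (cvg_trans _ (cvg_within_filter _ (expinv_cvg0 m.+1))).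
  apply: near_eq_cvg; near=> h.
  rewrite /= (expinv_eq0 m (lexx 0)) subr0 [_%:A]mulr1 addr0 /expinv.
  by case: ifP => _; rewrite /GRing.scale /= ?exprS ?mulrA ?mulr0.
split; first by apply/cvg_ex; exists 0.
exact: cvg_lim quot.
Unshelve. all: by end_near.
Qed.

Lemma is_derive_expinv_neg m s : s < 0 -> is_derive s (1:R) (expinv m) (expinv' m s).
Proof.
move=> s0; rewrite /expinv' !expinv_eq0 ?ltW // mulr0 addr0.
have E : \forall t \near s, (cst 0 : R -> R) t = expinv m t.
  near=> t; rewrite /= expinv_eq0 // ltW //.
  by near: t; exact: (cvgr_lt s).
exact: (near_eq_is_derive E).
Unshelve. all: by end_near.
Qed.

Lemma is_derive_expinv m s : is_derive s (1:R) (expinv m) (expinv' m s).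
Proof.
have [s0|s0|->] := ltgtP s 0.
- exact: is_derive_expinv_neg.
- exact: is_derive_expinv_pos.
- exact: is_derive_expinv0.
Qed.

Lemma continuous_expinv m : continuous (expinv m).
Proof.
move=> s; have [d _] := is_derive_expinv m s.
exact/differentiable_continuous/derivable1_diffP.
Qed.

End ExpInv.

Section SmoothCalculus.
Variables (R : realType) (n : nat).
Local Notation V := 'rV[R]_n.
Implicit Types (f g : V -> R) (x v : V).

Lemma Dseq_rcons vs v f : Dseq (rcons vs v) f = Dseq vs ('D_v f).
Proof. by rewrite /Dseq foldr_rcons. Qed.

Lemma smooth_derive f v : smooth f -> smooth ('D_v f).
Proof. by move=> sf vs; rewrite -Dseq_rcons; exact: sf. Qed.

Definition cderivable f := continuous f /\ forall x v, derivable f x v.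

Lemma smooth_cderivable f : smooth f -> cderivable f.
Proof. by move=> sf; exact: sf [::]. Qed.

Fixpoint smooth_upto (N : nat) f : Prop :=
  cderivable f /\ if N is N'.+1 then forall v, smooth_upto N' ('D_v f) else True.

Lemma smooth_uptoP f : smooth f <-> forall N, smooth_upto N f.
Proof.
split=> [sf N | sf vs].
  elim: N f sf => [|N IH] f sf; (split; first exact: smooth_cderivable).
    by [].
  by move=> v; apply/IH/smooth_derive.
elim/last_ind: vs f sf => [|vs v IH] f sf; first exact: (sf 0%N).1.
by rewrite Dseq_rcons; apply: IH => N; exact: (sf N.+1).2.
Qed.

Lemma smooth_upto_succ N f : smooth_upto N.+1 f -> smooth_upto N f.
Proof.
elim: N f => [|N IH] f [df sf]; (split; first exact: df).
  by [].
by move=> v; exact/IH/sf.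
Qed.

Section DeriveFun.
Variables (f g : V -> R) (v : V).
Hypotheses (df : forall x, derivable f x v) (dg : forall x, derivable g x v).

Lemma deriveD_fun : 'D_v (fun t => f t + g t) = fun t => 'D_v f t + 'D_v g t.
Proof. by apply/funext => x; rewrite -[fun t => _]/(f + g) deriveD. Qed.

Lemma deriveB_fun : 'D_v (fun t => f t - g t) = fun t => 'D_v f t - 'D_v g t.
Proof. by apply/funext => x; rewrite -[fun t => _]/(f - g) deriveB. Qed.

Lemma deriveM_fun :
  'D_v (fun t => f t * g t) = fun t => 'D_v f t * g t + f t * 'D_v g t.
Proof.
apply/funext => x; rewrite -[fun t => _]/(f * g) deriveM // addrC.
by congr (_ + _); exact: mulrC.
Qed.

Lemma deriveV_fun : (forall x, f x != 0) ->
  'D_v (fun t => (f t)^-1) = fun t => - ((f t)^-1 * (f t)^-1) * 'D_v f t.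
Proof. by move=> f0; apply/funext => x; rewrite deriveV // expr2 invfM. Qed.

End DeriveFun.

Lemma derive_cst_fun (c : R) v : 'D_v (fun _ : V => c) = fun _ => 0.
Proof. by apply/funext => x; exact: (derive_cst c x v). Qed.

Lemma cderivable_cst (c : R) : cderivable (fun _ => c).
Proof. by split=> [x|x v]; [exact: cst_continuous | exact: derivable_cst]. Qed.

Lemma cderivableD f g : cderivable f -> cderivable g -> cderivable (fun t => f t + g t).
Proof.
move=> [cf df] [cg dg]; split=> [x|x v].
  exact: (continuousD (cf x) (cg x)).
exact: (derivableD (df x v) (dg x v)).
Qed.

Lemma cderivableB f g : cderivable f -> cderivable g -> cderivable (fun t => f t - g t).
Proof.
move=> [cf df] [cg dg]; split=> [x|x v].
  exact: (continuousB (cf x) (cg x)).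
exact: (derivableB (df x v) (dg x v)).
Qed.

Lemma cderivableM f g : cderivable f -> cderivable g -> cderivable (fun t => f t * g t).
Proof.
move=> [cf df] [cg dg]; split=> [x|x v].
  exact: (continuousM (cf x) (cg x)).
exact: (derivableM (df x v) (dg x v)).
Qed.

Lemma cderivableV f : (forall x, f x != 0) -> cderivable f ->
  cderivable (fun t => (f t)^-1).
Proof.
move=> f0 [cf df]; split=> [x|x v].
  exact: (continuousV (f0 x) (cf x)).
exact: (derivableV (f0 x) (df x v)).
Qed.

Lemma smooth_upto_cst N (c : R) : smooth_upto N (fun _ => c).
Proof.
elim: N c => [|N IH] c; (split; first exact: cderivable_cst).
  by [].
by move=> v; rewrite derive_cst_fun.
Qed.

Lemma smooth_uptoD N f g :
  smooth_upto N f -> smooth_upto N g -> smooth_upto N (fun t => f t + g t).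
Proof.
elim: N f g => [|N IH] f g [df sf] [dg sg]; (split; first exact: cderivableD).
  by [].
by move=> v; rewrite (deriveD_fun (df.2^~ v) (dg.2^~ v)); exact: IH (sf v) (sg v).
Qed.

Lemma smooth_uptoB N f g :
  smooth_upto N f -> smooth_upto N g -> smooth_upto N (fun t => f t - g t).
Proof.
elim: N f g => [|N IH] f g [df sf] [dg sg]; (split; first exact: cderivableB).
  by [].
by move=> v; rewrite (deriveB_fun (df.2^~ v) (dg.2^~ v)); exact: IH (sf v) (sg v).
Qed.

Lemma smooth_uptoM N f g :
  smooth_upto N f -> smooth_upto N g -> smooth_upto N (fun t => f t * g t).
Proof.
elim: N f g => [|N IH] f g sf sg; have [[df sf'] [dg sg']] := (sf, sg).
  by split; first exact: cderivableM.
split=> [|v]; first exact: cderivableM.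
rewrite (deriveM_fun (df.2^~ v) (dg.2^~ v)).
apply: smooth_uptoD; first exact: IH (sf' v) (smooth_upto_succ sg).
exact: IH (smooth_upto_succ sf) (sg' v).
Qed.

Lemma smooth_uptoV N f : (forall x, f x != 0) ->
  smooth_upto N f -> smooth_upto N (fun t => (f t)^-1).
Proof.
move=> f0; elim: N => [|N IH] sf; have [df sf'] := sf.
  by split; first exact: cderivableV.
split=> [|v]; first exact: cderivableV.
have sfV := IH (smooth_upto_succ sf).
have sfV2 : smooth_upto N (fun t => - ((f t)^-1 * (f t)^-1)).
  under eq_fun do rewrite -mulN1r.
  exact: smooth_uptoM (smooth_upto_cst N (-1)) (smooth_uptoM sfV sfV).
by rewrite (deriveV_fun (df.2^~ v) f0); exact: smooth_uptoM sfV2 (sf' v).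
Qed.

Lemma smooth_cst (c : R) : smooth (fun _ : V => c).
Proof. by apply/smooth_uptoP => N; exact: smooth_upto_cst. Qed.

Lemma smoothD f g : smooth f -> smooth g -> smooth (fun t => f t + g t).
Proof.
move=> /smooth_uptoP sf /smooth_uptoP sg.
by apply/smooth_uptoP => N; exact: smooth_uptoD.
Qed.

Lemma smoothB f g : smooth f -> smooth g -> smooth (fun t => f t - g t).
Proof.
move=> /smooth_uptoP sf /smooth_uptoP sg.
by apply/smooth_uptoP => N; exact: smooth_uptoB.
Qed.

Lemma smoothM f g : smooth f -> smooth g -> smooth (fun t => f t * g t).
Proof.
move=> /smooth_uptoP sf /smooth_uptoP sg.
by apply/smooth_uptoP => N; exact: smooth_uptoM.
Qed.

Lemma smoothV f : (forall x, f x != 0) -> smooth f -> smooth (fun t => (f t)^-1).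
Proof. by move=> f0 /smooth_uptoP sf; apply/smooth_uptoP => N; exact: smooth_uptoV. Qed.

Lemma smooth_prod (I : Type) (s : seq I) (F : I -> V -> R) :
  (forall i, smooth (F i)) -> smooth (fun t => \prod_(i <- s) F i t).
Proof.
move=> sF; elim: s => [|a s IH].
  by under eq_fun do rewrite big_nil; exact: smooth_cst.
by under eq_fun do rewrite big_cons; exact: smoothM.
Qed.

End SmoothCalculus.

Section ChainRule.
Variables (R : realType) (n : nat).
Local Notation V := 'rV[R]_n.
Implicit Types (f q : V -> R) (x v : V).

Lemma derive_line f x v : 'D_v f x = 'D_1 (fun h : R => f (h *: v + x)) 0.
Proof.
rewrite /derive (_ : (fun h : R => h^-1 *: ((f \o shift x) (h *: v) - f x)) =
  (fun h : R => h^-1 *: (((fun h : R => f (h *: v + x)) \o shift 0) (h *: 1)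
    - f (0 *: v + x)))) //.
by apply/funext => h /=; rewrite addr0 scale0r add0r [_%:A]mulr1.
Qed.

(* [smooth] only provides directional derivatives, so the chain rule is taken
   along the line [h |-> h *: v + x]. *)
Lemma is_derive_chain (g : R -> R) f x v d :
  is_derive (f x) 1 g d -> derivable f x v -> is_derive x v (g \o f) (d * 'D_v f x).
Proof.
move=> gd fd.
pose F := fun h : R => f (h *: v + x).
have F0 : F 0 = f x by rewrite /F scale0r add0r.
have Fd : is_derive (0:R) (1:R) F ('D_v f x).
  by split; [exact: (derivable1P f x v).1 | rewrite derive_line].
rewrite -F0 in gd; have gFd := @is_derive1_comp R g F 0 d _ gd Fd.
split; first by apply/derivable1P; exact: (@ex_derive _ _ _ _ _ _ _ gFd).
by rewrite derive_line; exact: (@derive_val _ _ _ _ _ _ _ gFd).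
Qed.

Lemma is_derive_coord (i : 'I_n) x v : is_derive x v (fun t : V => t ord0 i) (v ord0 i).
Proof.
have quot : (fun h : R => h^-1 *: (((fun t : V => t ord0 i) \o shift x) (h *: v)
    - x ord0 i)) @ 0^' --> v ord0 i.
  apply: cvg_near_cst; near=> h.
  have h0 : h != 0 by near: h; exact: nbhs_dnbhs_neq.
  by rewrite /= !mxE addrK [_ *: _]mulKf.
split; first by apply/cvg_ex; exists (v ord0 i).
exact: cvg_lim quot.
Unshelve. all: by end_near.
Qed.

Lemma smooth_coord (i : 'I_n) : smooth (fun t : V => t ord0 i).
Proof.
have cd : cderivable (fun t : V => t ord0 i).
  split=> [|x v]; first exact: (@coord_continuous R 1 n ord0 i).
  by case: (is_derive_coord i x v).
apply/smooth_uptoP; case=> [|N]; (split; first exact: cd).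
  by [].
move=> v; have -> : 'D_v (fun t : V => t ord0 i) = (fun _ => v ord0 i).
  by apply/funext => x; case: (is_derive_coord i x v).
exact: smooth_upto_cst.
Qed.

Lemma smooth_expinv_comp m q : smooth q -> smooth (fun t => expinv m (q t)).
Proof.
move=> sq; have [cq dq] := smooth_cderivable sq.
have Dq k x v : is_derive x v (fun t => expinv k (q t)) (expinv' k (q x) * 'D_v q x).
  exact: is_derive_chain (is_derive_expinv k (q x)) (dq x v).
have cdq k : cderivable (fun t => expinv k (q t)).
  split=> [x|x v]; last by case: (Dq k x v).
  by apply: continuous_comp; [exact: cq | exact: continuous_expinv].
apply/smooth_uptoP => N; elim: N m => [|N IH] m; (split; first exact: cdq).
  by [].
move=> v; have -> : 'D_v (fun t => expinv m (q t)) = fun t => expinv' m (q t) * 'D_v q t.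
  by apply/funext => x; case: (Dq m x v).
apply: smooth_uptoM; last exact: (smooth_uptoP _).1 (smooth_derive v sq) N.
rewrite /expinv'; apply: smooth_uptoD (IH m.+2).
apply: smooth_uptoM (IH m.+1); exact: smooth_upto_cst.
Qed.

End ChainRule.

Section TestFunctions.
Variables (R : realType) (n : nat).
Local Notation V := 'rV[R]_n.
Implicit Types (f g : V -> R) (phi psi : V -> R[i]).

Lemma closure_sub_closed (E F : set V) : closed F -> E `<=` F -> closure E `<=` F.
Proof. by move=> cF EF; rewrite closureE; exact: smallest_sub. Qed.

Lemma supp_sub phi psi : (forall t, psi t = 0 -> phi t = 0) -> supp phi `<=` supp psi.
Proof.
by move=> h; apply: closureS => t /= /eqP phit; apply/eqP => psit; exact/phit/h.
Qed.

Lemma supp_real g : supp (fun t => (g t)%:C%C) = closure [set t | g t != 0].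
Proof.
by congr closure; apply/funext => t /=; rewrite fmorph_eq0.
Qed.

Definition rtest g := smooth g /\ compact (closure [set t | g t != 0]).

Lemma test_real g : rtest g -> test (fun t => (g t)%:C%C).
Proof.
by move=> [sg cg]; split; [exact: sg | split; [exact: smooth_cst | rewrite supp_real]].
Qed.

Lemma test_scale f phi : smooth f -> test phi -> test (fun t => (f t)%:C%C * phi t).
Proof.
move=> sf [sr [si cs]]; split; [|split].
- have -> : cRe (fun t => (f t)%:C%C * phi t) = (fun t => f t * cRe phi t).
    by apply/funext => t; rewrite /cRe; case: (phi t) => a b /=; ring.
  exact: smoothM.
- have -> : cIm (fun t => (f t)%:C%C * phi t) = (fun t => f t * cIm phi t).
    by apply/funext => t; rewrite /cIm; case: (phi t) => a b /=; ring.
  exact: smoothM.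
- apply: subclosed_compact cs (supp_sub _) => [|t ->]; last by rewrite mulr0.
  exact: closed_closure.
Qed.

Lemma rtest0 : rtest (fun _ => 0).
Proof.
split; first exact: smooth_cst.
rewrite (_ : [set t | 0 != 0] = set0) ?closure0; first exact: compact0.
by apply/funext => t; apply/propext; split => //; rewrite eqxx.
Qed.

Lemma test0 : test (fun _ : V => 0).
Proof.
by rewrite (_ : (fun _ => 0) = fun t => (0 : R)%:C%C) //; exact: test_real rtest0.
Qed.

Lemma rtest_add f g : rtest f -> rtest g -> rtest (fun t => f t + g t).
Proof.
move=> [sf cf] [sg cg]; split; first exact: smoothD.
apply: (subclosed_compact _ (compactU cf cg)); first exact: closed_closure.
rewrite -closureU; apply: closureS => t /= /eqP h.
have [f0|f0] := eqVneq (f t) 0; last by left; apply/eqP.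
by right; apply/eqP => g0; apply: h; rewrite f0 g0 addr0.
Qed.

Lemma rtest_sum (s : seq (V -> R)) : (forall g, g \in s -> rtest g) ->
  rtest (fun t => \sum_(g <- s) g t).
Proof.
elim: s => [_|g s IH gs].
  by under eq_fun do rewrite big_nil; exact: rtest0.
under eq_fun do rewrite big_cons.
apply: rtest_add; first by apply: gs; rewrite mem_head.
by apply: IH => h hs; apply: gs; rewrite in_cons hs orbT.
Qed.

End TestFunctions.

Section Hyperoperator.
Variables (R : realType) (X : completeNormedModType R[i]) (n : nat).
Variable A : ('rV[R]_n -> R[i]) -> X -> X.
Hypothesis hA : hyperoperator A.
Local Notation V := 'rV[R]_n.
Implicit Types (f g : V -> R) (phi psi theta : V -> R[i]) (x y : X).

Lemma A_bounded phi : test phi -> bounded_op (A phi).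
Proof. by case: hA => h _ _ _ _; exact: h. Qed.

Lemma A_continuous phi : test phi -> continuous (A phi).
Proof. by move/A_bounded => []. Qed.

Lemma A_cvg theta (u : nat -> X) l : test theta -> u j @[j --> \oo] --> l ->
  A theta (u j) @[j --> \oo] --> A theta l.
Proof. by move=> ttheta ul; apply: continuous_cvg => //; exact: A_continuous. Qed.

Lemma A_opB phi x y : test phi -> A phi (x - y) = A phi x - A phi y.
Proof.
move=> /A_bounded[linA _]; have := linA (-1) y x.
by rewrite !scaleN1r addrC => ->; rewrite addrC.
Qed.

Lemma A_op0 phi : test phi -> A phi 0 = 0.
Proof. by move=> tphi; have := A_opB 0 0 tphi; rewrite subrr => ->; rewrite subrr. Qed.

Lemma A_add phi psi x : test phi -> test psi ->
  A (fun t => phi t + psi t) x = A phi x + A psi x.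
Proof.
case: hA => _ linA _ _ _ tphi tpsi; have := linA 1 _ _ tphi tpsi.
by under eq_fun do rewrite mul1r; move=> ->; rewrite scale1r.
Qed.

Lemma A_sub phi psi x : test phi -> test psi ->
  A (fun t => phi t - psi t) x = A phi x - A psi x.
Proof.
case: hA => _ linA _ _ _ tphi tpsi; have := linA (-1) _ _ tpsi tphi.
by under eq_fun do rewrite mulN1r addrC; move=> ->; rewrite scaleN1r addrC.
Qed.

Lemma A_mul phi psi x : test phi -> test psi ->
  A (fun t => phi t * psi t) x = A phi (A psi x).
Proof. by case: hA => _ _ mulA _ _ tphi tpsi; rewrite mulA. Qed.

Lemma A_zero x : A (fun _ => 0) x = 0.
Proof.
have := A_sub x (@test0 R n) (@test0 R n).
by under eq_fun do rewrite subr0; rewrite subrr.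
Qed.

Lemma A_sep x y : (forall theta, test theta -> A theta x = A theta y) -> x = y.
Proof.
case: hA => _ _ _ _ [_ kerA] h; apply/eqP; rewrite -subr_eq0; apply/eqP.
by apply: kerA => theta ttheta; rewrite A_opB // h // subrr.
Qed.

Lemma A_sum_real (s : seq (V -> R)) x : (forall g, g \in s -> rtest g) ->
  A (fun t => (\sum_(g <- s) g t)%:C%C) x = \sum_(g <- s) A (fun t => (g t)%:C%C) x.
Proof.
elim: s => [_|g s IH gs].
  by rewrite big_nil; under eq_fun do rewrite big_nil; exact: A_zero.
have rg : rtest g by apply: gs; rewrite mem_head.
have rs h : h \in s -> rtest h by move=> hs; apply: gs; rewrite in_cons hs orbT.
rewrite big_cons -IH //; under eq_fun do rewrite big_cons rmorphD.
by apply: A_add; apply/test_real => //; exact: rtest_sum.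
Qed.

Lemma A_scale_comm g theta phi y : smooth g -> test theta -> test phi ->
  A theta (A (fun t => (g t)%:C%C * phi t) y) = A (fun t => (g t)%:C%C * theta t) (A phi y).
Proof.
move=> sg ttheta tphi.
rewrite -(A_mul _ ttheta (test_scale sg tphi)) -(A_mul _ (test_scale sg ttheta) tphi).
by congr (A _ y); apply/funext => t; rewrite mulrA [theta t * _]mulrC.
Qed.

Lemma A_scale_eq g phi psi y z : smooth g -> test phi -> test psi -> A phi y = A psi z ->
  A (fun t => (g t)%:C%C * phi t) y = A (fun t => (g t)%:C%C * psi t) z.
Proof.
move=> sg tphi tpsi e; apply: A_sep => theta ttheta.
by rewrite !A_scale_comm // e.
Qed.

Lemma fa1E g phi y : smooth g -> test phi ->
  fa1 A g (A phi y) = A (fun t => (g t)%:C%C * phi t) y.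
Proof.
move=> sg tphi; rewrite /fa1; case: pselect => [h|[]]; last by exists (phi, y).
case: (cid h) => [[phi' y'] /= [tphi' e]].
by apply: A_scale_eq => //; rewrite e.
Qed.

Lemma A_fa1 g theta x : smooth g -> test theta -> DA A x ->
  A theta (fa1 A g x) = A (fun t => (g t)%:C%C * theta t) x.
Proof.
by move=> sg ttheta [phi [y [tphi ->]]]; rewrite fa1E // A_scale_comm.
Qed.

Lemma fa1_DA f x : smooth f -> DA A x -> DA A (fa1 A f x).
Proof.
move=> sf [phi [y [tphi ->]]]; rewrite (fa1E y sf tphi).
by exists (fun t => (f t)%:C%C * phi t), y; split; first exact: test_scale.
Qed.

Lemma fa1_comp f g x : smooth f -> smooth g -> DA A x ->
  fa1 A g (fa1 A f x) = fa1 A (fun t => f t * g t) x.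
Proof.
move=> sf sg [phi [y [tphi ->]]].
rewrite (fa1E y sf tphi) (fa1E y sg (test_scale sf tphi)) (fa1E y (smoothM sf sg) tphi).
by congr (A _ y); apply/funext => t; rewrite rmorphM /= mulrA [_ * (f t)%:C%C]mulrC.
Qed.

Lemma in_graph_closure_A m (f : V -> 'rV[R]_m) x z i theta :
  smoothv f -> in_graph_closure A f x z -> test theta ->
  A theta (z i) = A (fun t => (f t ord0 i)%:C%C * theta t) x.
Proof.
move=> sf [xs [dxs [cx cz]]] ttheta.
have tf : test (fun t => (f t ord0 i)%:C%C * theta t) by exact: test_scale.
have Az := A_cvg ttheta (cz i).
have Ax : A theta (fa A f (xs j) i) @[j --> \oo] -->
    A (fun t => (f t ord0 i)%:C%C * theta t) x.
  apply: cvg_trans (A_cvg tf cx).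
  by apply: near_eq_cvg; near=> j; rewrite /fa /= A_fa1.
exact: norm_cvg_unique Az Ax.
Unshelve. all: by end_near.
Qed.

Lemma closable_fa m (f : V -> 'rV[R]_m) : smoothv f -> closable A f.
Proof.
move=> sf x z1 z2 h1 h2; apply/funext => i; apply: A_sep => theta ttheta.
by rewrite (in_graph_closure_A _ sf h1) // (in_graph_closure_A _ sf h2).
Qed.

End Hyperoperator.

Section UniformConvergence.
Variables (R : realType) (n : nat).
Local Notation V := 'rV[R]_n.
Implicit Types (f g h : V -> R) (K : set V).

Lemma Dseq_add vs f g : smooth f -> smooth g ->
  Dseq vs (fun t => f t + g t) = fun t => Dseq vs f t + Dseq vs g t.
Proof.
move=> sf sg; elim: vs => [//|v vs IH] /=.
by rewrite IH (deriveD_fun (fun x => (sf vs).2 x v) (fun x => (sg vs).2 x v)).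
Qed.

Lemma Dseq_sub vs f g : smooth f -> smooth g ->
  Dseq vs (fun t => f t - g t) = fun t => Dseq vs f t - Dseq vs g t.
Proof.
move=> sf sg; elim: vs => [//|v vs IH] /=.
by rewrite IH (deriveB_fun (fun x => (sf vs).2 x v) (fun x => (sg vs).2 x v)).
Qed.

Lemma unif0D (a b : nat -> V -> R) : unif0 a -> unif0 b -> unif0 (fun j t => a j t + b j t).
Proof.
move=> ua ub e e0; have e20 : 0 < e / 2 by rewrite divr_gt0.
apply: filterS2 (ua _ e20) (ub _ e20) => j ha hb t.
by apply: le_trans (ler_normD _ _) _; rewrite [e]splitr lerD.
Qed.

Lemma derive_eq0_off K h v : closed K -> (forall t, ~ K t -> h t = 0) ->
  forall t, ~ K t -> 'D_v h t = 0.
Proof.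
move=> cK h0 t Kt.
have E : \forall s \near t, h s = (cst 0 : V -> R) s.
  by near=> s; apply: h0; near: s; apply: open_nbhs_nbhs; split => //; exact: closed_openC.
by rewrite (near_eq_derive _ E) derive_cst.
Unshelve. all: by end_near.
Qed.

Definition Dcvg0_on K (g : nat -> V -> R) := forall vs e, 0 < e ->
  \forall k \near \oo, forall t, K t -> `|Dseq vs (g k) t| <= e.

Lemma unif0_mul_compact K (g : nat -> V -> R) h : compact K -> continuous h ->
  (forall t, ~ K t -> h t = 0) -> Dcvg0_on K g -> unif0 (fun k t => g k t * h t).
Proof.
move=> cK ch h0 gK e e0.
have /ex_strict_bound_gt0[M M0 /= hM] : bounded_set (h @` K).
  exact/compact_bounded/continuous_compact/cK/continuous_subspaceT.
apply: filterS (gK [::] _ (divr_gt0 e0 M0)) => k gk t.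
have [Kt|Kt] := pselect (K t); last by rewrite h0 // mulr0 normr0 ltW.
rewrite normrM -(divfK (lt0r_neq0 M0) e).
by apply: ler_pM => //; [exact: gk | apply/ltW/hM; exists t].
Qed.

(* By the Leibniz rule, every derivative of [g k * h] is a sum of products of a
   derivative of [g k] with a derivative of [h], which also vanishes off [K]. *)
Lemma unif0_Dseq_mul K (g : nat -> V -> R) h : compact K -> smooth h ->
  (forall t, ~ K t -> h t = 0) -> (forall k, smooth (g k)) -> Dcvg0_on K g ->
  forall vs, unif0 (fun k => Dseq vs (fun t => g k t * h t)).
Proof.
move=> cK + + + + vs; elim/last_ind: vs g h => [|vs v IH] g h sh h0 sg gK.
  exact: unif0_mul_compact cK (smooth_cderivable sh).1 h0 gK.
have E k : Dseq (rcons vs v) (fun t => g k t * h t) = fun t =>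
    Dseq vs (fun t => 'D_v (g k) t * h t) t + Dseq vs (fun t => g k t * 'D_v h t) t.
  rewrite Dseq_rcons (deriveM_fun (fun x => (sg k [::]).2 x v) (fun x => (sh [::]).2 x v)).
  by rewrite (Dseq_add vs (smoothM (smooth_derive v (sg k)) sh)
    (smoothM (sg k) (smooth_derive v sh))).
rewrite (funext E); apply: unif0D.
  apply: IH sh h0 (fun k => smooth_derive v (sg k)) _ => ws e e0.
  by apply: filterS (gK (rcons ws v) e e0) => k; rewrite Dseq_rcons.
apply: IH (smooth_derive v sh) _ sg gK.
exact: derive_eq0_off (compact_closed (@norm_hausdorff _ _) cK) h0.
Qed.

Lemma Dcvg0_scale (g : nat -> V -> R) (phi : V -> R[i]) : (forall k, smooth (g k)) ->
  test phi -> Dcvg0_on (supp phi) g -> Dcvg0 (fun k t => (g k t)%:C%C * phi t).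
Proof.
move=> sg tphi gK; have [sRe [sIm cphi]] := tphi.
have off0 (h : V -> R) :
    (forall t, phi t = 0 -> h t = 0) -> forall t, ~ supp phi t -> h t = 0.
  move=> hphi t nt; apply: hphi; apply/eqP; apply: contra_notT nt => nz.
  exact: subset_closure.
split; first by move=> k; exact: test_scale (sg k) tphi.
split; first by exists (supp phi); split => // k; apply: supp_sub => t ->; rewrite mulr0.
move=> vs; split.
- have -> : (fun k => Dseq vs (cRe (fun t => (g k t)%:C%C * phi t))) =
      fun k => Dseq vs (fun t => g k t * cRe phi t).
    apply/funext => k; congr (Dseq vs _); apply/funext => t; rewrite /cRe.
    by case: (phi t) => a b /=; ring.
  have Re0 : forall t, ~ supp phi t -> cRe phi t = 0.
    by apply: off0 => t; rewrite /cRe => ->.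
  exact: unif0_Dseq_mul cphi sRe Re0 sg gK vs.
- have -> : (fun k => Dseq vs (cIm (fun t => (g k t)%:C%C * phi t))) =
      fun k => Dseq vs (fun t => g k t * cIm phi t).
    apply/funext => k; congr (Dseq vs _); apply/funext => t; rewrite /cIm.
    by case: (phi t) => a b /=; ring.
  have Im0 : forall t, ~ supp phi t -> cIm phi t = 0.
    by apply: off0 => t; rewrite /cIm => ->.
  exact: unif0_Dseq_mul cphi sIm Im0 sg gK vs.
Qed.

End UniformConvergence.

Lemma opnorm0_cvg0 (R : realType) (X : completeNormedModType R[i])
    (T : nat -> X -> X) (y : X) :
  opnorm0 T -> T j y @[j --> \oo] --> 0.
Proof.
move=> h; apply/cvgr0Pnorm_le => e e0.
have y1 : 0 < `|y| + 1 by apply: ltr_wpDl.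
have ey := divr_gt0 e0 y1.
apply: filterS (h _ ey) => j Ty; apply: le_trans (Ty y) _.
rewrite -[leRHS](divfK (lt0r_neq0 y1)).
by apply: ler_wpM2l; [exact: ltW | rewrite lerDl].
Qed.

Section EConvergence.
Variables (R : realType) (X : completeNormedModType R[i]) (n : nat).
Variable A : ('rV[R]_n -> R[i]) -> X -> X.
Hypothesis hA : hyperoperator A.

Lemma fa_Ecvg p (fk : nat -> 'rV[R]_n -> 'rV[R]_p) f x i :
  Ecvg fk f -> DA A x -> fa A (fk k) x i @[k --> \oo] --> fa A f x i.
Proof.
move=> [sfk [sf cv]] [phi [y [tphi ->]]].
pose g k t := fk k t ord0 i - f t ord0 i.
have sg k : smooth (g k) by apply: smoothB; [exact: sfk | exact: sf].
have faE k : fa A (fk k) (A phi y) i =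
    A (fun t => (g k t)%:C%C * phi t) y + fa A f (A phi y) i.
  rewrite /fa (fa1E hA y (sfk k i) tphi) (fa1E hA y (sf i) tphi).
  rewrite -(A_add hA _ (test_scale (sg k) tphi) (test_scale (sf i) tphi)).
  by congr (A _ y); apply/funext => t; rewrite /g rmorphB /=; ring.
have g0 : Dcvg0_on (supp phi) g.
  move=> vs e e0; apply: filterS (cv i vs _ (proj2 (proj2 tphi)) e e0) => k hk t Kt.
  by rewrite /g (Dseq_sub vs (sfk k i) (sf i)); exact: hk.
rewrite (funext faE) -[X in _ --> X]add0r; apply: cvgD; last exact: cvg_cst.
apply: (@opnorm0_cvg0 _ _ (fun k => A (fun t => (g k t)%:C%C * phi t))).
by case: hA => _ _ _ contA _; apply/contA/(Dcvg0_scale sg tphi g0).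
Qed.

End EConvergence.

Section Bumps.
Variables (R : realType) (n : nat).
Local Notation V := 'rV[R]_n.
Implicit Types (c t : V) (r : R).

Definition cube c r : set V := [set t | forall i, `|t ord0 i - c ord0 i| <= r].

Lemma cube_compact c r : compact (cube c r).
Proof.
rewrite (_ : cube c r = [set t : V | forall i,
    `[(c ord0 i - r), (c ord0 i + r)]%classic (t ord0 i)]).
  apply: (@rV_compact _ n (fun i => `[(c ord0 i - r), (c ord0 i + r)]%classic)) => i.
  exact: segment_compact.
by apply/funext => t; apply/propext; split => h i; have := h i; rewrite ler_distl /= in_itv.
Qed.

Lemma cube_sub_ball c r : 0 < r -> cube c (r / 2) `<=` ball c r.
Proof.
move=> r0 t ct; split => // i j; rewrite (ord1 i) /ball /= distrC.
by apply: le_lt_trans (ct j) _; rewrite ltr_pdivrMr //; lra.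
Qed.

Definition bump c r t := \prod_(i < n) expinv 0 (r ^+ 2 - (t ord0 i - c ord0 i) ^+ 2).

Lemma smooth_bump c r : smooth (bump c r).
Proof.
apply: smooth_prod => i; apply: smooth_expinv_comp; apply: smoothB; first exact: smooth_cst.
have sd : smooth (fun t : V => t ord0 i - c ord0 i).
  by apply: smoothB; [exact: smooth_coord | exact: smooth_cst].
by under eq_fun do rewrite expr2; exact: smoothM.
Qed.

Lemma bump_ge0 c r t : 0 <= bump c r t.
Proof. by apply: prodr_ge0 => i _; exact: expinv_ge0. Qed.

Lemma bump_neq0_cube c r t : 0 < r -> bump c r t != 0 -> cube c r t.
Proof.
move=> r0 /prodf_neq0 nz i; have := nz i isT.
set d := t ord0 i - c ord0 i.
have [pos|npos] := ltP 0 (r ^+ 2 - d ^+ 2); last by rewrite expinv_eq0 // eqxx.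
by move=> _; rewrite ler_norml; apply/andP; split; nra.
Qed.

Lemma bump_ge_ball c r t : 0 < r -> ball c r t ->
  expinv 0 (3 * r ^+ 2) ^+ n <= bump c (2 * r) t.
Proof.
move=> r0 [_ ct]; rewrite /bump.
rewrite (_ : _ ^+ n = \prod_(i < n) expinv 0 (3 * r ^+ 2)).
  2: by rewrite prodr_const card_ord.
apply: ler_prod => i _; rewrite expinv_ge0 /=; apply: expinv0_le.
set d := t ord0 i - c ord0 i.
have : `|d| < r by rewrite /d distrC; exact: ct.
by rewrite ltr_norml => /andP[? ?]; nra.
Qed.

(* On [ball c r] every factor of [bump c (2 * r)] is at least [expinv 0 (3 * r ^+ 2)]. *)
Definition unit_bump c r t := (expinv 0 (3 * r ^+ 2) ^+ n)^-1 * bump c (2 * r) t.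

Lemma unit_bump_ge0 c r t : 0 <= unit_bump c r t.
Proof. by rewrite mulr_ge0 ?bump_ge0 // invr_ge0 exprn_ge0 // expinv_ge0. Qed.

Lemma unit_bump_ge1 c r t : 0 < r -> ball c r t -> 1 <= unit_bump c r t.
Proof.
move=> r0 ct; have m0 : 0 < expinv 0 (3 * r ^+ 2) ^+ n.
  by rewrite exprn_gt0 // expinv_gt0 // mulr_gt0 // exprn_gt0.
by rewrite /unit_bump ler_pdivlMl // mulr1; exact: bump_ge_ball.
Qed.

Lemma unit_bump_supp c r : 0 < r ->
  closure [set t | unit_bump c r t != 0] `<=` cube c (2 * r).
Proof.
move=> r0; apply: closure_sub_closed.
  by apply: compact_closed; [exact: norm_hausdorff | exact: cube_compact].
move=> t /= /eqP nz; apply: bump_neq0_cube; first by rewrite mulr_gt0.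
by apply/eqP => b0; apply: nz; rewrite /unit_bump b0 mulr0.
Qed.

Lemma rtest_unit_bump c r : 0 < r -> rtest (unit_bump c r).
Proof.
move=> r0; split; first exact: smoothM (smooth_cst _) (smooth_bump _ _).
apply: (@subclosed_compact _ _ (cube c (2 * r))).
- exact: closed_closure.
- exact: cube_compact.
- exact: unit_bump_supp.
Qed.

Lemma bump_cover (C : set V) (P : set V -> Prop) : compact C ->
  (forall t, C t -> exists U, [/\ open U, U t & P U]) ->
  exists2 s : seq (V -> R),
    (forall g, g \in s -> [/\ rtest g, forall t, 0 <= g t &
       exists2 U, P U & closure [set t | g t != 0] `<=` U]) &
    exists2 W, open W /\ C `<=` W & forall t, W t -> 1 <= \sum_(g <- s) g t.
Proof.
move=> cC hU.
have [rad hrad] : {rad : V -> R & forall t, C t ->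
    0 < rad t /\ exists2 U, P U & cube t (2 * rad t) `<=` U}.
  apply: (@choice V R (fun t r => C t -> 0 < r /\ exists2 U, P U & cube t (2 * r) `<=` U)).
  move=> t; have [Ct|Ct] := pselect (C t); last by exists 1.
  have [U [oU Ut PU]] := hU t Ct.
  have /nbhs_ballP[e e0 eU] : nbhs t U by exact: open_nbhs_nbhs.
  exists (e / 4) => _; split; first by rewrite divr_gt0.
  exists U => //; apply: subset_trans eU.
  by rewrite (_ : 2 * (e / 4) = e / 2); [exact: cube_sub_ball | field].
have cov : C `<=` \bigcup_(t in C) ball t (rad t).
  by move=> t Ct; exists t => //; apply: ballxx; case: (hrad t Ct).
move: cC; rewrite compact_cover => /(_ V C (fun t => ball t (rad t))).
case=> [t _|//|D DC CD]; first exact: ball_open.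
have {}DC (u : V) : u \in D -> C u by move/DC/set_mem.
have Dpos (u : V) : u \in D -> 0 < rad u by move=> uD; case: (hrad u (DC u uD)).
exists [seq unit_bump u (rad u) | u <- finmap.enum_fset D].
  move=> _ /mapP[u uD ->]; have uD' : u \in D by [].
  have [r0 [U PU sU]] := hrad u (DC u uD').
  split; [exact: rtest_unit_bump | exact: unit_bump_ge0 |].
  by exists U => //; apply: subset_trans sU; exact: unit_bump_supp.
exists (\bigcup_(u in [set u | u \in D]) ball u (rad u)).
  by split; [apply: bigcup_open => u _; exact: ball_open | move=> t /CD[u uD bu]; exists u].
move=> t [u uD bu]; rewrite big_map.
have uD' : u \in finmap.enum_fset D by [].
rewrite (perm_big _ (perm_to_rem uD')) big_cons -[1]addr0.
apply: lerD; first exact: unit_bump_ge1 (Dpos u uD) bu.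
by apply: sumr_ge0 => v _; exact: unit_bump_ge0.
Qed.

Definition smooth_step (s : R) := expinv 0 s / (expinv 0 s + expinv 0 (1 - s)).

Lemma smooth_step_den_gt0 (s : R) : 0 < expinv 0 s + expinv 0 (1 - s).
Proof.
have [s0|s0] := ltP 0 s; first by rewrite ltr_wpDr ?expinv_ge0 ?expinv_gt0.
by rewrite ltr_wpDl ?expinv_ge0 // expinv_gt0 //; lra.
Qed.

Lemma smooth_step_eq0 (s : R) : s <= 0 -> smooth_step s = 0.
Proof. by move=> s0; rewrite /smooth_step expinv_eq0 // mul0r. Qed.

Lemma smooth_step_eq1 (s : R) : 1 <= s -> smooth_step s = 1.
Proof.
move=> s1; rewrite /smooth_step (expinv_eq0 0 (_ : 1 - s <= 0)) ?addr0 ?divff //; last lra.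
by rewrite gt_eqF // expinv_gt0 //; lra.
Qed.

Lemma smooth_step_comp q : smooth q -> smooth (fun t => smooth_step (q t)).
Proof.
move=> sq; apply: smoothM (smooth_expinv_comp 0 sq) _.
apply: smoothV => [t|]; first by rewrite gt_eqF // smooth_step_den_gt0.
apply: smoothD (smooth_expinv_comp 0 sq) (smooth_expinv_comp 0 _).
by apply: smoothB sq; exact: smooth_cst.
Qed.

Lemma cutoff_exists (K : set V) : compact K ->
  exists2 chi : V -> R, rtest chi &
    exists2 W, open W /\ K `<=` W & forall t, W t -> chi t = 1.
Proof.
move=> cK; have [s hs [W WK W1]] := @bump_cover K (fun=> True) cK
  (fun t _ => ex_intro _ setT (And3 openT I I)).
have rs g : g \in s -> rtest g by case/hs.
have [sgs cgs] := rtest_sum rs.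
exists (fun t => smooth_step (\sum_(g <- s) g t)); last first.
  by exists W => // t Wt; rewrite smooth_step_eq1 // W1.
split; first exact: smooth_step_comp.
apply: (@subclosed_compact _ _ (closure [set t | \sum_(g <- s) g t != 0])) => //.
  exact: closed_closure.
apply: closureS => t /= /eqP nz; apply/eqP => s0.
by apply: nz; rewrite s0 smooth_step_eq0.
Qed.

End Bumps.

Section Localization.
Variables (R : realType) (X : completeNormedModType R[i]) (n : nat).
Variable A : ('rV[R]_n -> R[i]) -> X -> X.
Hypothesis hA : hyperoperator A.
Local Notation V := 'rV[R]_n.
Implicit Types (phi psi theta : V -> R[i]) (x y : X).

(* [psi] is divided by a smooth positive [G] equal on [supp psi] to a finite sum of
   bumps [gs], each killing [x]; then [A psi x = A (psi / G) (A gs x) = 0]. *)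
Lemma A_vanish_local psi x : test psi ->
  (forall t, supp psi t -> exists U, [/\ open U, U t &
     forall phi, test phi -> supp phi `<=` U -> A phi x = 0]) ->
  A psi x = 0.
Proof.
move=> tpsi loc; have [_ [_ cpsi]] := tpsi.
have [s hs [W [oW sW] W1]] := bump_cover cpsi loc.
have rs g : g \in s -> rtest g by case/hs.
pose gs t := \sum_(g <- s) g t.
have [sgs _] := rtest_sum rs.
have Ags : A (fun t => (gs t)%:C%C) x = 0.
  rewrite (A_sum_real hA _ rs) big_seq big1 // => g gs_.
  have [rg _ [U PU sU]] := hs g gs_.
  by apply: PU; [exact: test_real | rewrite supp_real].
have gs_ge0 t : 0 <= gs t by rewrite /gs big_seq sumr_ge0 // => g /hs[].
pose G t := gs t + expinv 0 (1 - gs t).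
have G_gt0 t : 0 < G t.
  have [g1|g1] := leP 1 (gs t).
    by rewrite /G expinv_eq0 ?subr_le0 // addr0; exact: lt_le_trans g1.
  by rewrite /G ltr_wpDl // expinv_gt0 // subr_gt0.
have s1 : smooth (fun t => 1 - gs t) := smoothB (smooth_cst 1) sgs.
have sG : smooth G := smoothD sgs (smooth_expinv_comp 0 s1).
have sGV : smooth (fun t => (G t)^-1) by apply: smoothV => // t; rewrite gt_eqF.
have psiE : psi = fun t => ((G t)^-1)%:C%C * psi t * (gs t)%:C%C.
  apply/funext => t; have [->|nz] := eqVneq (psi t) 0; first by rewrite mulr0 mul0r.
  have g1 : 1 <= gs t by apply: W1; apply: sW; exact: subset_closure.
  rewrite /G expinv_eq0 ?subr_le0 // addr0 mulrAC -rmorphM mulVf ?rmorph1 ?mul1r //.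
  by rewrite gt_eqF // (lt_le_trans ltr01 g1).
rewrite psiE (A_mul hA _ (test_scale sGV tpsi) (test_real (rtest_sum rs))).
by rewrite Ags (A_op0 hA (test_scale sGV tpsi)).
Qed.

Lemma A_vanish_off_locspec psi x (W : set V) : test psi -> open W ->
  locspec A x `<=` W -> (forall t, W t -> psi t = 0) -> A psi x = 0.
Proof.
move=> tpsi oW locW psiW; apply: A_vanish_local tpsi _ => t psit.
have nWt : ~ W t.
  have : supp psi `<=` ~` W.
    apply: closure_sub_closed; first exact: open_closedC.
    by move=> s /= /eqP nz Ws; exact/nz/psiW.
  exact.
apply: contrapT => nU; apply/nWt/locW => U oU Ut.
apply: contrapT => nphi; apply: nU; exists U; split => // phi tphi sphi.
by apply: contrapT => nz; apply: nphi; exists phi; do 2!split => //; exact/eqP.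
Qed.

Lemma A_cutoff_id (K : set V) (chi : V -> R) (W : set V) y : rtest chi -> open W ->
  K `<=` W -> (forall t, W t -> chi t = 1) -> DAK A K y ->
  A (fun t => (chi t)%:C%C) y = y.
Proof.
move=> rchi oW KW chi1 Ky; apply/esym/(A_sep hA) => theta ttheta.
have tchi := test_real rchi.
rewrite -(A_mul hA _ ttheta tchi); under eq_fun do rewrite mulrC.
apply/eqP; rewrite -subr_eq0 -(A_sub hA _ ttheta (test_scale rchi.1 ttheta)); apply/eqP.
have -> : (fun t => theta t - (chi t)%:C%C * theta t) = fun t => (1 - chi t)%:C%C * theta t.
  by apply/funext => t; rewrite rmorphB rmorph1 mulrBl mul1r.
apply: (A_vanish_off_locspec _ oW).
- by apply: test_scale ttheta; apply: smoothB rchi.1; exact: smooth_cst.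
- by move=> t /Ky; exact: KW.
- by move=> t Wt; rewrite chi1 // subrr mul0r.
Qed.

Lemma fa_cvg_DAK m (K : set V) (xs : nat -> X) x (f : V -> 'rV[R]_m) i :
  compact K -> (forall j, DAK A K (xs j)) -> xs j @[j --> \oo] --> x -> smoothv f ->
  fa A f (xs j) i @[j --> \oo] --> fa A f x i.
Proof.
move=> cK Kxs xsx sf.
have [chi rchi [W [oW KW] chi1]] := cutoff_exists cK.
have tchi := test_real rchi.
have chi_id y : DAK A K y -> A (fun t => (chi t)%:C%C) y = y.
  exact: A_cutoff_id rchi oW KW chi1.
have chix : A (fun t => (chi t)%:C%C) x = x.
  apply: norm_cvg_unique (A_cvg hA tchi xsx) _.
  by rewrite (funext (fun j => chi_id _ (Kxs j))).
have faE y : A (fun t => (chi t)%:C%C) y = y ->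
    fa A f y i = A (fun t => (f t ord0 i)%:C%C * (chi t)%:C%C) y.
  by move=> e; rewrite -{1}e /fa (fa1E hA y (sf i) tchi).
have tfchi : test (fun t => (f t ord0 i)%:C%C * (chi t)%:C%C) := test_scale (sf i) tchi.
rewrite faE // (funext (fun j => faE _ (chi_id _ (Kxs j)))).
exact (A_cvg hA tfchi xsx).
Qed.

End Localization.

Unset Implicit Arguments. Set Strict Implicit.

Theorem proposition4p1 (R : realType) (X : completeNormedModType R[i]) (n : nat)
    (A : ('rV[R]_n -> R[i]) -> X -> X) :
  hyperoperator A ->
  [/\ (* (a) *)
      (forall f : 'rV[R]_n -> R, smooth f ->
         (forall x, DA A x -> DA A (fa1 A f x)) /\
         (forall g : 'rV[R]_n -> R, smooth g ->
            forall x, DA A x -> fa1 A g (fa1 A f x) = fa1 A (fun t => f t * g t) x)),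
      (* (b) *)
      (forall (m : nat) (f : 'rV[R]_n -> 'rV[R]_m), smoothv f -> closable A f),
      (* (c) *)
      (forall (p : nat) (fk : nat -> 'rV[R]_n -> 'rV[R]_p) (f : 'rV[R]_n -> 'rV[R]_p),
         Ecvg fk f -> forall x, DA A x ->
           forall i : 'I_p, fa A (fk k) x i @[k --> \oo] --> fa A f x i) &
      (* (d) *)
      (forall (m : nat) (K : set 'rV[R]_n) (xs : nat -> X) (x : X)
              (f : 'rV[R]_n -> 'rV[R]_m),
         compact K -> (forall j, DAK A K (xs j)) -> xs j @[j --> \oo] --> x ->
         smoothv f ->
         forall i : 'I_m, fa A f (xs j) i @[j --> \oo] --> fa A f x i)].
Proof.
move=> hA; split.
- move=> f sf; split=> [x Dx|g sg x Dx]; first exact (fa1_DA hA sf Dx).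
  exact (fa1_comp hA sf sg Dx).
- by move=> m f sf; exact (closable_fa hA sf).
- by move=> p fk f fkf x Dx i; exact (fa_Ecvg hA fkf Dx).
- by move=> m K xs x f cK Kxs xsx sf i; exact (fa_cvg_DAK hA cK Kxs xsx sf).
Qed.
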